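(* Let $f=\frac1n\sum_{z=1}^nf_z$ where each $\nabla f_z$ is $L$-Lipschitz and $\|\nabla f_z(x)\|\le l$ for all $x$ and $z$. In an SCSG inner loop (see context) with $b\ge1$, $n\ge8b$ and $\eta L=\gamma(b/n)^{2/3}$, $\gamma\le\frac13$, each iteration satisfies $$\mathbb{E}[f(x_t)-f(x_{t-1})]\le\frac{5l^2\gamma^2}{L}\left(\frac bn\right)^{4/3}.$$
   Context: SCSG inner loop with snapshot $\tilde x$: $\tilde\mu=\nabla f(\tilde x)$, $x_0=\tilde x$, and $x_t=x_{t-1}-\eta(\nabla f_{I_t}(x_{t-1})-\nabla f_{I_t}(\tilde x)+\tilde\mu)$, where $I_t\subset[n]$ is a uniformly random subset of size $b$ and $\nabla f_I=\frac1{|I|}\sum_{i\in I}\nabla f_i$. *)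

From HB Require Import structures.
From mathcomp Require Import all_boot all_order all_algebra.
From mathcomp Require Import all_classical all_reals all_analysis.
Set Implicit Arguments. Unset Strict Implicit. Unset Printing Implicit Defensive.
Import Order.TTheory GRing.Theory Num.Theory.
Import numFieldNormedType.Exports.
Local Open Scope ring_scope.

Section SCSG.
Variables (R : realType) (d n : nat).

Definition dotv (u v : 'rV[R]_d) : R := \sum_(i < d) u ord0 i * v ord0 i.
Definition norm2 (u : 'rV[R]_d) : R := Num.sqrt (dotv u u).

Definition favg (f : 'I_n -> 'rV[R]_d -> R) (x : 'rV[R]_d) : R :=
  n%:R^-1 * \sum_(z < n) f z x.
Definition fullgrad (g : 'I_n -> 'rV[R]_d -> 'rV[R]_d) (x : 'rV[R]_d) : 'rV[R]_d :=
  n%:R^-1 *: \sum_(z < n) g z x.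

Definition gradI (g : 'I_n -> 'rV[R]_d -> 'rV[R]_d) (I : {set 'I_n}) (x : 'rV[R]_d)
  : 'rV[R]_d := (#|I|%:R)^-1 *: \sum_(i in I) g i x.

Definition scsg_step (g : 'I_n -> 'rV[R]_d -> 'rV[R]_d) (eta : R) (xt : 'rV[R]_d)
  (x : 'rV[R]_d) (I : {set 'I_n}) : 'rV[R]_d :=
  x - eta *: (gradI g I x - gradI g I xt + fullgrad g xt).

Definition scsg_iter (g : 'I_n -> 'rV[R]_d -> 'rV[R]_d) (eta : R) (xt : 'rV[R]_d)
  (s : seq {set 'I_n}) : 'rV[R]_d := foldl (scsg_step g eta xt) xt s.

(* expectation over k independent minibatches, each uniform among the b-subsets of [n] *)
Definition valid_batches (b k : nat) : pred (k.-tuple {set 'I_n}) :=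
  fun s => all (fun I : {set 'I_n} => #|I| == b) s.
Definition Ebatch (b k : nat) (F : k.-tuple {set 'I_n} -> R) : R :=
  (\sum_(s : k.-tuple {set 'I_n} | valid_batches b s) F s)
    / #|[pred s : k.-tuple {set 'I_n} | valid_batches b s]|%:R.

End SCSG.

From HB Require Import structures.
From mathcomp Require Import all_boot all_order all_algebra.
From mathcomp Require Import all_classical all_reals all_analysis.
From mathcomp Require Import perm ring lra.
Import Order.TTheory GRing.Theory Num.Theory.
Import numFieldNormedType.Exports.
Set Implicit Arguments. Unset Strict Implicit. Unset Printing Implicit Defensive.
Local Open Scope ring_scope.

(* The descent lemma for the L-smooth average f bounds f(x_t) - f(x_{t-1}) by
   -eta <grad f(x_{t-1}), v_t> + L eta^2 |v_t|^2 / 2, where v_t is the SCSG direction.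
   Averaged over the uniform batch I_t, the earlier batches being fixed, v_t is an
   unbiased estimate of grad f(x_{t-1}), so the linear term averages to
   -eta |grad f(x_{t-1})|^2 <= 0, while |v_t| <= 3 l.  With eta L = gamma (b/n)^(2/3)
   the quadratic term is 9/2 l^2 gamma^2 (b/n)^(4/3) / L. *)

Section InnerProduct.
Variables (R : realType) (d : nat).
Implicit Types u v w : 'rV[R]_d.

Lemma dotvC u v : dotv u v = dotv v u.
Proof. by apply: eq_bigr => i _; rewrite mulrC. Qed.

Lemma dotvDl u v w : dotv (u + v) w = dotv u w + dotv v w.
Proof. by rewrite /dotv -big_split; apply: eq_bigr => i _; rewrite mxE mulrDl. Qed.

Lemma dotvZl (k : R) u v : dotv (k *: u) v = k * dotv u v.
Proof. by rewrite /dotv mulr_sumr; apply: eq_bigr => i _; rewrite mxE mulrA. Qed.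

Lemma dotvNl u v : dotv (- u) v = - dotv u v.
Proof. by rewrite -scaleN1r dotvZl mulN1r. Qed.

Lemma dotvBl u v w : dotv (u - v) w = dotv u w - dotv v w.
Proof. by rewrite dotvDl dotvNl. Qed.

Lemma dotvDr u v w : dotv u (v + w) = dotv u v + dotv u w.
Proof. by rewrite dotvC dotvDl !(dotvC u). Qed.

Lemma dotvZr (k : R) u v : dotv u (k *: v) = k * dotv u v.
Proof. by rewrite dotvC dotvZl dotvC. Qed.

Lemma dotvNr u v : dotv u (- v) = - dotv u v.
Proof. by rewrite dotvC dotvNl dotvC. Qed.

Lemma dotvBr u v w : dotv u (v - w) = dotv u v - dotv u w.
Proof. by rewrite dotvDr dotvNr. Qed.

Lemma dotv0l v : dotv 0 v = 0.
Proof. by rewrite -(scale0r 0) dotvZl mul0r. Qed.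

Lemma dotv_suml (I : finType) (P : pred I) (F : I -> 'rV[R]_d) v :
  dotv (\sum_(i | P i) F i) v = \sum_(i | P i) dotv (F i) v.
Proof. by elim/big_rec2: _ => [|i y1 y2 _ <-]; rewrite ?dotv0l ?dotvDl. Qed.

Lemma dotv_ge0 u : 0 <= dotv u u.
Proof. by apply: sumr_ge0 => i _; rewrite -expr2 sqr_ge0. Qed.

Lemma dotv_eq0 u : (dotv u u == 0) = (u == 0).
Proof.
apply/idP/eqP => [|->]; last by rewrite dotv0l.
rewrite psumr_eq0 => [/allP u0|i _]; last by rewrite -expr2 sqr_ge0.
apply/matrixP => i j; rewrite mxE (ord1 i).
by apply/eqP; rewrite -sqrf_eq0 expr2 (eqP (u0 j (mem_index_enum j))).
Qed.

Lemma norm2_ge0 u : 0 <= norm2 u.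
Proof. exact: sqrtr_ge0. Qed.

Lemma norm2_sqr u : norm2 u ^+ 2 = dotv u u.
Proof. by rewrite sqr_sqrtr // dotv_ge0. Qed.

Lemma norm2_eq0 u : (norm2 u == 0) = (u == 0).
Proof. by rewrite -sqrf_eq0 norm2_sqr dotv_eq0. Qed.

Lemma norm20 : norm2 (0 : 'rV[R]_d) = 0.
Proof. by apply/eqP; rewrite norm2_eq0. Qed.

Lemma norm2Z (k : R) u : norm2 (k *: u) = `|k| * norm2 u.
Proof. by rewrite /norm2 dotvZl dotvZr mulrA sqrtrM ?sqr_ge0 // -expr2 sqrtr_sqr. Qed.

Lemma norm2N u : norm2 (- u) = norm2 u.
Proof. by rewrite -scaleN1r norm2Z normrN1 mul1r. Qed.

(* Expand [0 <= |c u - a v|^2] with [a = |u|], [c = |v|]. *)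
Lemma dotv_le_norm2 u v : dotv u v <= norm2 u * norm2 v.
Proof.
have [->|u0] := eqVneq u 0; first by rewrite dotv0l norm20 mul0r.
have [->|v0] := eqVneq v 0; first by rewrite dotvC dotv0l norm20 mulr0.
set a := norm2 u; set c := norm2 v.
have a_gt0 : 0 < a by rewrite lt_def norm2_eq0 u0 norm2_ge0.
have c_gt0 : 0 < c by rewrite lt_def norm2_eq0 v0 norm2_ge0.
have := dotv_ge0 (c *: u - a *: v).
rewrite !dotvBl !dotvBr !dotvZl !dotvZr -!norm2_sqr (dotvC v u) -/a -/c => sq_ge0.
have ac_gt0 : 0 < a * c by apply: mulr_gt0.
nra.
Qed.

Lemma norm2D u v : norm2 (u + v) <= norm2 u + norm2 v.
Proof.
rewrite -(ler_pXn2r (_ : 0 < 2)%N) ?nnegrE ?addr_ge0 ?norm2_ge0 //.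
rewrite norm2_sqr dotvDl !dotvDr (dotvC v u) sqrrD !norm2_sqr.
have := dotv_le_norm2 u v; lra.
Qed.

Lemma norm2_sum (I : finType) (P : pred I) (F : I -> 'rV[R]_d) :
  norm2 (\sum_(i | P i) F i) <= \sum_(i | P i) norm2 (F i).
Proof.
elim/big_rec2: _ => [|i y1 y2 _ ih]; first by rewrite norm20.
by apply: le_trans (norm2D _ _) _; rewrite lerD2l.
Qed.

Lemma norm2_mean_le (I : finType) (A : {set I}) (F : I -> 'rV[R]_d) (l : R) :
  (0 < #|A|)%N -> (forall i, i \in A -> norm2 (F i) <= l) ->
  norm2 (#|A|%:R^-1 *: \sum_(i in A) F i) <= l.
Proof.
move=> A_gt0 Fl; rewrite norm2Z ger0_norm ?invr_ge0 ?ler0n // ler_pdivrMl ?ltr0n //.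
rewrite mulr_natl -sumr_const; apply: le_trans (norm2_sum _ _) _.
exact: ler_sum.
Qed.

End InnerProduct.

Section DescentLemma.
Variables (R : realType) (d : nat) (F : 'rV[R]_d -> R) (G : 'rV[R]_d -> 'rV[R]_d) (L : R).
Hypothesis F_grad : forall x, differentiable F x /\ 'd F x =1 dotv (G x).
Hypothesis G_lipschitz : forall x y, norm2 (G x - G y) <= L * norm2 (x - y).

Lemma is_derive_along_line (x h : 'rV[R]_d) (s : R) :
  is_derive s 1 (fun s => F (x + s *: h)) (dotv (G (x + s *: h)) h).
Proof.
have line_diff : is_diff s (fun s : R => x + s *: h) (fun u : R => u *: h).
  have -> : (fun u : R => u *: h) = (fun u => 0 + u *: h) by apply/funext => u; rewrite add0r.
  exact: is_diffD.
have F_diff := (F_grad (x + s *: h)).1.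
have comp_diff : differentiable (F \o (fun s : R => x + s *: h)) s.
  exact: differentiable_comp.
apply: DeriveDef; first exact: diff_derivable.
by rewrite deriveE // diff_comp //= (F_grad _).2 diff_val scale1r.
Qed.

(* [psi s := F (x + s h) - s <G x, h> - s^2 L/2 |h|^2] is nonincreasing on [0, 1]. *)
Lemma descent_lemma (x h : 'rV[R]_d) :
  F (x + h) - F x <= dotv (G x) h + L / 2 * dotv h h.
Proof.
pose c := dotv (G x) h; pose k := L / 2 * dotv h h.
pose psi (s : R) := F (x + s *: h) - (s * c + s ^+ 2 * k).
have psi_derive (s : R) : is_derive s 1 psi (dotv (G (x + s *: h)) h - (c + (2 * s) * k)).
  have line_derive := is_derive_along_line x h s.
  apply: is_deriveB; apply: is_derive_eq.
  by rewrite !scaler0 !add0r /GRing.scale /= !mulr1; ring.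
suff : psi 1 <= psi 0 by rewrite /psi scale0r scale1r addr0 /c /k; lra.
apply: (@ler0_derive1_le_cc _ psi 0 1); rewrite ?in_itv /= ?lexx ?ler01 //.
- move=> s; rewrite in_itv /= => /andP[s_gt0 _].
  rewrite derive1E (@derive_val _ _ _ _ _ _ _ (psi_derive s)).
  have cs := dotv_le_norm2 (G (x + s *: h) - G x) h.
  have lip := G_lipschitz (x + s *: h) x.
  rewrite addrAC subrr add0r norm2Z (gtr0_norm s_gt0) in lip.
  have := ler_wpM2r (norm2_ge0 h) lip.
  rewrite dotvBl -/c in cs; rewrite /k -norm2_sqr; nra.
- apply: continuous_subspaceT => s.
  by apply/differentiable_continuous/derivable1_diffP; case: (psi_derive s).
Qed.

End DescentLemma.

Section BatchMean.
Variables (R : realType) (n b : nat).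

Let batches_through (i : 'I_n) := #|[set I : {set 'I_n} | (#|I| == b) && (i \in I)]|.

(* The transposition of [i] and [j] maps the batches through [i] injectively into those
   through [j]. *)
Let batches_through_le i j : (batches_through i <= batches_through j)%N.
Proof.
rewrite /batches_through.
rewrite -[X in (X <= _)%N](card_imset _ (imset_inj (@perm_inj _ (tperm i j)))).
apply: subset_leq_card; apply/fintype.subsetP => _ /imsetP[I + ->].
rewrite !inE => /andP[/eqP cardI iI].
rewrite card_imset ?cardI ?eqxx /=; last exact: perm_inj.
by apply/imsetP; exists i; rewrite ?tpermL.
Qed.

Let card_batches_through i :
  (n * batches_through i = b * #|[set I : {set 'I_n} | #|I| == b]|)%N.
Proof.
transitivity (\sum_(j < n) batches_through j).
  rewrite (eq_bigr (fun=> batches_through i)) => [|j _]; last first.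
    by apply/eqP; rewrite eqn_leq !batches_through_le.
  by rewrite sum_nat_const card_ord.
rewrite mulnC -sum_nat_const.
transitivity (\sum_(I in [set I : {set 'I_n} | #|I| == b]) \sum_(j in I) 1)%N; last first.
  by apply: eq_bigr => I; rewrite inE sum1_card => /eqP.
rewrite (exchange_big_dep predT) //=; apply: eq_bigr => j _.
by rewrite /batches_through -sum1_card; apply: eq_bigl => I; rewrite !inE.
Qed.

Lemma sum_batch_means (V : lmodType R) (w : 'I_n -> V) : (0 < b)%N ->
  \sum_(I : {set 'I_n} | #|I| == b) #|I|%:R^-1 *: \sum_(i in I) w i
  = #|[set I : {set 'I_n} | #|I| == b]|%:R *: (n%:R^-1 *: \sum_i w i).
Proof.
move=> b_gt0.
under eq_bigr => I /eqP -> do rewrite scaler_sumr.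
rewrite (exchange_big_dep predT) //= !scaler_sumr; apply: eq_bigr => i _.
have -> : \sum_(I : {set 'I_n} | (#|I| == b) && (i \in I)) b%:R^-1 *: w i
          = b%:R^-1 *: w i *+ batches_through i.
  by rewrite -sumr_const; apply: eq_bigl => I; rewrite inE.
rewrite -scaler_nat !scalerA; congr (_ *: _); apply/eqP.
have n_gt0 : (0 < n)%N by apply: leq_ltn_trans (ltn_ord i).
by rewrite eqr_div ?pnatr_eq0 -?lt0n // -!natrM mulnC card_batches_through mulnC.
Qed.

End BatchMean.

Lemma big_tuple_rcons (V : nmodType) (T : finType) (a : pred T) (k : nat)
    (F : k.+1.-tuple T -> V) :
  \sum_(s : k.+1.-tuple T | all a s) F s
  = \sum_(s : k.-tuple T | all a s) \sum_(x | a x) F [tuple of rcons s x].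
Proof.
have take_sizeP (s : k.+1.-tuple T) : size (take k s) == k by rewrite size_takel ?size_tuple.
pose split_last (s : k.+1.-tuple T) := (Tuple (take_sizeP s), last (thead s) s).
pose join_last (sx : k.-tuple T * T) := [tuple of rcons sx.1 sx.2].
have join_lastK : cancel join_last split_last.
  move=> [s x]; congr pair; last exact: last_rcons.
  by apply: val_inj; rewrite /= -cats1 take_size_cat ?size_tuple.
have split_lastK : cancel split_last join_last.
  move=> s; apply: val_inj => /=; have := size_tuple s.
  case/lastP: (val s) => [|s' x] //; rewrite size_rcons last_rcons => -[<-].
  by rewrite -[in take _ _]cats1 take_size_cat.
rewrite (reindex join_last); last exact: onW_bij (Bijective join_lastK split_lastK).
rewrite pair_big_dep; apply: eq_bigl => -[s x].
by rewrite /= all_rcons andbC.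
Qed.

Lemma Ebatch_le (R : realType) (n b k : nat) (F : k.-tuple {set 'I_n} -> R) (B : R) :
  0 <= B ->
  \sum_(s : k.-tuple {set 'I_n} | valid_batches b s) F s
    <= \sum_(s : k.-tuple {set 'I_n} | valid_batches b s) B ->
  Ebatch b F <= B.
Proof.
move=> B_ge0; rewrite /Ebatch (eq_bigl (mem [pred s | valid_batches b s])) // sumr_const.
set N := #|_|; have [->|N_gt0] := posnP N; first by rewrite invr0 mulr0.
by rewrite ler_pdivrMr ?ltr0n // mulr_natr.
Qed.

Section InnerLoop.
Variables (R : realType) (d n b : nat).
Variables (f : 'I_n -> 'rV[R]_d -> R) (g : 'I_n -> 'rV[R]_d -> 'rV[R]_d).
Variables (L l eta : R) (xt : 'rV[R]_d).
Hypothesis f_grad : forall z x, differentiable (f z) x /\ 'd (f z) x =1 dotv (g z x).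
Hypothesis g_lipschitz : forall z x y, norm2 (g z x - g z y) <= L * norm2 (x - y).
Hypothesis g_bounded : forall z x, norm2 (g z x) <= l.
Hypothesis n_gt0 : (0 < n)%N.

Lemma favg_descent (y h : 'rV[R]_d) :
  favg f (y + h) - favg f y <= dotv (fullgrad g y) h + L / 2 * dotv h h.
Proof.
rewrite /favg /fullgrad -mulrBr -sumrB dotvZl dotv_suml.
rewrite -[L / 2 * _](mulKf (_ : n%:R != 0)) ?pnatr_eq0 -?lt0n // -mulrDr.
rewrite ler_pM2l ?invr_gt0 ?ltr0n // -[n in n%:R * _]card_ord mulr_natl -sumr_const.
rewrite -big_split.
by apply: ler_sum => z _; apply: descent_lemma.
Qed.

Lemma norm2_gradI_le (I : {set 'I_n}) y : (0 < #|I|)%N -> norm2 (gradI g I y) <= l.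
Proof. by move=> I_gt0; apply: norm2_mean_le. Qed.

Lemma norm2_fullgrad_le y : norm2 (fullgrad g y) <= l.
Proof.
rewrite /fullgrad -[n in n%:R](card_ord n) -cardsT.
rewrite (eq_bigl (fun z => z \in [set: 'I_n])) => [|z]; last by rewrite finset.in_setT.
by apply: norm2_mean_le; rewrite ?cardsT ?card_ord.
Qed.

Definition scsg_dir (y : 'rV[R]_d) (I : {set 'I_n}) : 'rV[R]_d :=
  gradI g I y - gradI g I xt + fullgrad g xt.

Lemma norm2_scsg_dir_le y (I : {set 'I_n}) : (0 < #|I|)%N -> norm2 (scsg_dir y I) <= 3 * l.
Proof.
move=> I_gt0; rewrite /scsg_dir.
have := norm2D (gradI g I y - gradI g I xt) (fullgrad g xt).
have := norm2D (gradI g I y) (- gradI g I xt); rewrite norm2N.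
have := norm2_gradI_le y I_gt0; have := norm2_gradI_le xt I_gt0; have := norm2_fullgrad_le xt.
lra.
Qed.

Lemma sum_scsg_dir y : (0 < b)%N ->
  \sum_(I : {set 'I_n} | #|I| == b) scsg_dir y I
  = #|[set I : {set 'I_n} | #|I| == b]|%:R *: fullgrad g y.
Proof.
move=> b_gt0; rewrite big_split sumrB /= !sum_batch_means //.
rewrite (eq_bigl (fun I => I \in [set I : {set 'I_n} | #|I| == b])) => [|I]; last by rewrite inE.
by rewrite sumr_const /fullgrad !scaler_nat addrNK.
Qed.

Lemma sum_scsg_step_le y : (0 < b)%N -> 0 <= L -> 0 <= eta ->
  \sum_(I : {set 'I_n} | #|I| == b) (favg f (scsg_step g eta xt y I) - favg f y)
  <= \sum_(I : {set 'I_n} | #|I| == b) (L / 2 * eta ^+ 2 * (3 * l) ^+ 2).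
Proof.
move=> b_gt0 L_ge0 eta_ge0.
apply: (@le_trans _ _ (\sum_(I : {set 'I_n} | #|I| == b)
  (- eta * dotv (fullgrad g y) (scsg_dir y I) + L / 2 * eta ^+ 2 * (3 * l) ^+ 2))).
  apply: ler_sum => I /eqP cardI.
  have := favg_descent y (- (eta *: scsg_dir y I)).
  rewrite dotvNr dotvZr dotvNl dotvNr opprK dotvZl dotvZr => /le_trans; apply.
  have dir_le : norm2 (scsg_dir y I) <= 3 * l by apply: norm2_scsg_dir_le; rewrite cardI.
  have -> : L / 2 * (eta * (eta * dotv (scsg_dir y I) (scsg_dir y I)))
            = L / 2 * eta ^+ 2 * dotv (scsg_dir y I) (scsg_dir y I) by ring.
  rewrite mulNr lerD2l ler_wpM2l ?mulr_ge0 ?sqr_ge0 ?divr_ge0 // -norm2_sqr.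
  by rewrite lerXn2r ?nnegrE ?norm2_ge0 // (le_trans (norm2_ge0 _) dir_le).
rewrite big_split gerDr /= -mulr_sumr.
under eq_bigr do rewrite dotvC.
rewrite -dotv_suml sum_scsg_dir // dotvZl.
by rewrite mulNr oppr_le0 mulr_ge0 // mulr_ge0 ?ler0n ?dotv_ge0.
Qed.

End InnerLoop.

Theorem lemma23 (R : realType) (d n b : nat)
  (f : 'I_n -> 'rV[R]_d -> R) (g : 'I_n -> 'rV[R]_d -> 'rV[R]_d)
  (L l gamma eta : R) (xt : 'rV[R]_d) (t : nat) :
  (forall z x, differentiable (f z) x /\ 'd (f z) x =1 (fun h => dotv (g z x) h)) ->
  (forall z x y, norm2 (g z x - g z y) <= L * norm2 (x - y)) ->
  (forall z x, norm2 (g z x) <= l) ->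
  0 < L ->
  (1 <= b)%N -> (8 * b <= n)%N ->
  0 < gamma -> gamma <= 3^-1 ->
  eta * L = gamma * ((b%:R / n%:R) `^ (2 / 3)) ->
  Ebatch b (fun s : t.+1.-tuple {set 'I_n} =>
      favg f (scsg_iter g eta xt s) - favg f (scsg_iter g eta xt (take t s)))
  <= 5 * l ^+ 2 * gamma ^+ 2 / L * ((b%:R / n%:R) `^ (4 / 3)).
Proof.
move=> f_grad g_lipschitz g_bounded L_gt0 b_gt0 n_ge8b gamma_gt0 _ eta_L.
have n_gt0 : (0 < n)%N by apply: leq_trans n_ge8b; rewrite muln_gt0.
set p := (b%:R / n%:R) `^ (2 / 3) in eta_L.
have -> : (b%:R / n%:R : R) `^ (4 / 3) = p ^+ 2.
  have bn_neq0 : b%:R / n%:R != 0 :> R by rewrite mulf_neq0 ?invr_eq0 ?pnatr_eq0 -?lt0n.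
  have -> : (4 / 3 : R) = 2 / 3 + 2 / 3 by field.
  by rewrite powRD ?bn_neq0 ?implybT // expr2.
have eta_def : eta = gamma * p / L by rewrite -eta_L mulfK ?gt_eqF.
have p_ge0 : 0 <= p by apply: powR_ge0.
have eta_ge0 : 0 <= eta.
  by rewrite eta_def; apply: divr_ge0 (ltW L_gt0); apply: mulr_ge0 (ltW gamma_gt0) p_ge0.
set B := 5 * l ^+ 2 * gamma ^+ 2 / L * p ^+ 2.
have B_ge0 : 0 <= B.
  apply: mulr_ge0 (sqr_ge0 _); apply: divr_ge0 (ltW L_gt0).
  by apply: mulr_ge0 (sqr_ge0 _); apply: mulr_ge0 (sqr_ge0 _).
have step_le_B : L / 2 * eta ^+ 2 * (3 * l) ^+ 2 <= B.
  have -> : L / 2 * eta ^+ 2 * (3 * l) ^+ 2 = 9 / 10 * B.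
    by rewrite eta_def /B; field; rewrite gt_eqF.
  lra.
apply: Ebatch_le => //; rewrite /valid_batches !big_tuple_rcons; apply: ler_sum => s _.
under eq_bigr => I _ do rewrite /scsg_iter foldl_rcons /= -cats1 take_size_cat ?size_tuple //.
apply: le_trans (sum_scsg_step_le xt f_grad g_lipschitz g_bounded n_gt0 _ b_gt0 (ltW L_gt0) eta_ge0) _.
exact: ler_sum.
Qed.
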